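(* Let $H$ be a countable group and $E$ a normal subgroup of $H$. Let $H\curvearrowright X$ be a Borel action on a standard Borel space such that $E$ acts on $X$ trivially. Set $\mathcal{H}=X\rtimes H$ and $\mathcal{R}=\mathcal{R}(H/E\curvearrowright X)$, and let $q\colon\mathcal{H}\to\mathcal{R}$ be the quotient map $(x,h)\mapsto(x,h^{-1}x)$. Suppose that $\mathcal{R}$ is hyperfinite. Then the exact sequence of groupoids \[1\to X\times E\to\mathcal{H}\xrightarrow{q}\mathcal{R}\to1\] splits, i.e. there exists a Borel homomorphism $\sigma\colon\mathcal{R}\to\mathcal{H}$ which is a section of $q$.
   Context: $X\rtimes H$ is the groupoid on $X\times H$ with unit space $X$, range $(x,h)\mapsto x$, source $(x,h)\mapsto h^{-1}x$, product $(x,h)(h^{-1}x,k)=(x,hk)$. $\mathcal{R}(H/E\curvearrowright X)=\{(x,h^{-1}x):x\in X,h\in H\}$ is the orbit equivalence relation, a groupoid with $r(x,y)=x$, $s(x,y)=y$, $(x,y)(y,z)=(x,z)$. A countable Borel equivalence relation is hyperfinite if it is an increasing union of Borel equivalence relations with finite classes. *)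

From HB Require Import structures.
From mathcomp Require Import all_boot all_order all_algebra.
From mathcomp Require Import all_classical all_reals.
From mathcomp Require Import measure lebesgue_measure Rstruct.
Set Implicit Arguments. Unset Strict Implicit. Unset Printing Implicit Defensive.
Import Order.TTheory GRing.Theory Num.Theory.
Local Open Scope classical_set_scope.
Local Open Scope ring_scope.

(* A measurable space X is standard Borel if its sigma-algebra is the Borel
   sigma-algebra of some Polish (separable, completely metrizable) topology
   on X; we present that topology by a complete separable metric. *)
Section StdBorel.
Context {d : measure_display} (X : measurableType d).
Local Notation RR := Rdefinitions.R.

Definition is_metric (dist : X -> X -> RR) : Prop :=
  (forall x y, 0 <= dist x y) /\
  (forall x y, dist x y = 0 <-> x = y) /\
  (forall x y, dist x y = dist y x) /\
  (forall x y z, dist x z <= dist x y + dist y z).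

Definition metric_open (dist : X -> X -> RR) (U : set X) : Prop :=
  forall x, U x -> exists2 e : RR, 0 < e & [set y | dist x y < e] `<=` U.

Definition metric_complete (dist : X -> X -> RR) : Prop :=
  forall u : nat -> X,
    (forall e : RR, 0 < e -> exists N, forall m n, (N <= m)%N -> (N <= n)%N ->
        dist (u m) (u n) < e) ->
    exists x, forall e : RR, 0 < e -> exists N, forall n, (N <= n)%N ->
        dist (u n) x < e.

Definition metric_separable (dist : X -> X -> RR) : Prop :=
  exists s : nat -> X, forall x (e : RR), 0 < e -> exists n, dist x (s n) < e.

Definition standard_borel : Prop :=
  exists dist : X -> X -> RR,
    [/\ is_metric dist, metric_complete dist, metric_separable dist &
        (@measurable d X) = <<s [set U | metric_open dist U] >>].
End StdBorel.

Local Close Scope ring_scope.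
Local Open Scope group_scope.

Definition countable_group (H : groupType) : Prop :=
  exists f : H -> nat, injective f.

Definition normal_subgroup (H : groupType) (E : set H) : Prop :=
  [/\ E 1, (forall a b, E a -> E b -> E (a * b)), (forall a, E a -> E a^-1) &
      (forall a h, E a -> E (a ^ h))].

Section Action.
Context (H : groupType) {d : measure_display} (X : measurableType d).

Definition borel_action (act : H -> X -> X) : Prop :=
  [/\ (forall x, act 1 x = x),
      (forall g h x, act (g * h) x = act g (act h x)) &
      (forall h, measurable_fun setT (act h))].

(* The orbit equivalence relation R(H/E ~ X) = {(x, h^-1 x)} *)
Definition orbit_rel (act : H -> X -> X) : set (X * X) :=
  [set p | exists h : H, p.2 = act h^-1 p.1].

Definition equiv_rel_on (F : set (X * X)) : Prop :=
  [/\ (forall x, F (x, x)), (forall x y, F (x, y) -> F (y, x)) &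
      (forall x y z, F (x, y) -> F (y, z) -> F (x, z))].

Definition hyperfinite (R : set (X * X)) : Prop :=
  exists F : nat -> set (X * X),
    [/\ (forall n, equiv_rel_on (F n)),
        (forall n, measurable (F n)),
        (forall n x, finite_set [set y | F n (x, y)]),
        (forall n, F n `<=` F n.+1) &
        \bigcup_n F n = R].

Definition xh_range (a : X * H) : X := a.1.
Definition xh_source (act : H -> X -> X) (a : X * H) : X := act a.2^-1 a.1.
Definition xh_mul (a b : X * H) : X * H := (a.1, a.2 * b.2).

Definition xh_quot (act : H -> X -> X) (a : X * H) : X * X :=
  (a.1, act a.2^-1 a.1).

(* Borel measurability of a map D -> X * H, where H carries the discrete
   sigma-algebra (so X * H has the product sigma-algebra generated by the
   rectangles B x {h}) *)
Definition borel_into_XH {T} {dT : measure_display} (D : set T)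
    (f : T -> X * H) (mT : set (set T)) : Prop :=
  forall (B : set X) (h : H), measurable B ->
    mT (D `&` f @^-1` (B `*` [set h])).

Definition borel_section (act : H -> X -> X) (sigma : X * X -> X * H) : Prop :=
  let R := orbit_rel act in
  [/\ @borel_into_XH (X * X)%type d R sigma measurable,
      (forall p, R p -> xh_quot act (sigma p) = p) &
      (forall x y z, R (x, y) -> R (y, z) ->
         xh_source act (sigma (x, y)) = xh_range (sigma (y, z)) /\
         sigma (x, z) = xh_mul (sigma (x, y)) (sigma (y, z)))].
End Action.

(* Write R as the union of the increasing Borel equivalence relations F_n
   with finite classes. Comparing points lexicographically through their
   distances to a dense sequence is a Borel linear order, so the minimum
   r_n(x) of the F_n-class of x is a Borel selector. Enumerating H, let
   g(u, v) be the first element moving u to v, and put psi_0(x) = g(x, r_0 x),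
   psi_(n+1)(x) = g(r_n x, r_(n+1) x) psi_n(x), so that psi_n(x) x = r_n(x).
   If (x, y) is in F_n, the factors added after stage n are the same for x
   and y, hence c(x, y) = psi_n(x)^-1 psi_n(y) does not depend on n; then
   sigma(x, y) = (x, c(x, y)) is a Borel section of q, multiplicative by
   telescoping. *)

From HB Require Import structures.
From mathcomp Require Import all_boot all_order all_algebra.
From mathcomp Require Import all_classical all_reals.
From mathcomp Require Import measure lebesgue_measure Rstruct.
From mathcomp Require Import measurable_realfun lra.
Set Implicit Arguments. Unset Strict Implicit. Unset Printing Implicit Defensive.
Import Order.TTheory GRing.Theory Num.Theory.
Local Open Scope classical_set_scope.
Local Open Scope group_scope.


Section FiniteMinimal.
Context {T : choiceType} (lt : T -> T -> Prop).
Hypotheses (lt_irrefl : forall x, ~ lt x x)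
  (lt_trans : forall x y z, lt x y -> lt y z -> lt x z).

Lemma seq_has_minimal (s : seq T) x : x \in s ->
  exists2 y, y \in s & forall z, z \in s -> ~ lt z y.
Proof.
elim: s x => // a t IH _ _; case: t IH => [_ | b t IH].
  by exists a => [|z]; rewrite ?mem_seq1 // => /eqP ->.
have [y yt y_min] := IH b (mem_head b t).
have [lt_ay | nlt_ay] := pselect (lt a y).
  exists a => [|z]; first exact: mem_head.
  rewrite in_cons => /predU1P [-> // | zt lt_za].
  exact: y_min zt (lt_trans lt_za lt_ay).
exists y => [|z]; first by rewrite in_cons yt orbT.
by rewrite in_cons => /predU1P [-> // | /y_min].
Qed.

Lemma finite_set_has_minimal (A : set T) : finite_set A -> A !=set0 ->
  exists2 y, A y & forall z, A z -> ~ lt z y.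
Proof.
case/finite_fsetP => S -> [y0 Sy0].
have [y Sy y_min] := @seq_has_minimal (finmap.enum_fset S) y0 Sy0.
by exists y => // z Sz; exact: y_min.
Qed.
End FiniteMinimal.

Section DistanceLex.
(* The cast lets the Borel structure of a [realType] be inferred on [R]. *)
Local Notation RR := (Rdefinitions.R : realType).
Context {d : measure_display} (X : measurableType d) (dist : X -> X -> RR)
  (s : nat -> X).

Definition dist_lex (x y : X) : Prop :=
  exists m, (forall j, (j < m)%N -> dist x (s j) = dist y (s j)) /\
            (dist x (s m) < dist y (s m))%R.

Lemma dist_lex_irrefl x : ~ dist_lex x x.
Proof. by case=> m [_]; rewrite ltxx. Qed.

Lemma dist_lex_trans x y z : dist_lex x y -> dist_lex y z -> dist_lex x z.
Proof.
move=> [m1 [eq1 lt1]] [m2 [eq2 lt2]].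
case: (ltngtP m1 m2) => [m12|m21|eq12].
- exists m1; split; last by rewrite -(eq2 _ m12).
  by move=> j jm1; rewrite eq1 // eq2 // (ltn_trans jm1 m12).
- exists m2; split; last by rewrite (eq1 _ m21).
  by move=> j jm2; rewrite eq1 ?eq2 // (ltn_trans jm2 m21).
- subst m2; exists m1; split; first by move=> j jm; rewrite eq1 ?eq2.
  exact: lt_trans lt1 lt2.
Qed.

Hypotheses (dist_metric : is_metric dist)
  (s_dense : forall x (e : RR), (0 < e)%R -> exists n, (dist x (s n) < e)%R).

Lemma eq_dist_seq x y : (forall m, dist x (s m) = dist y (s m)) -> x = y.
Proof.
move=> eq_xy; have [d_ge0 [d_eq0 [d_sym d_tri]]] := dist_metric.
apply/d_eq0; apply/eqP; rewrite eq_le d_ge0 andbT leNgt; apply/negP => d_gt0.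
have half_gt0 : (0 < dist x y / 2)%R by rewrite divr_gt0.
have [m dm] := s_dense x half_gt0.
have := d_tri x (s m) y; rewrite (d_sym (s m) y) -eq_xy; lra.
Qed.

Lemma dist_lex_total x y : x <> y -> dist_lex x y \/ dist_lex y x.
Proof.
move=> neq_xy.
have [|m ne_m m_min] := ex_minnP (_ : exists m, dist x (s m) != dist y (s m)).
  apply: contrapT => all_eq; apply/neq_xy/eq_dist_seq => m.
  by apply/eqP; apply: contrapT => ne; apply: all_eq; exists m; apply/negP.
have eq_lt j : (j < m)%N -> dist x (s j) = dist y (s j).
  by move=> jm; apply/eqP; apply: contraTT jm => /m_min; rewrite -leqNgt.
by case/orP: (lt_total ne_m) => lt_m; [left | right]; exists m;
  split => // j /eq_lt.
Qed.

Hypothesis open_measurable : forall U, metric_open dist U -> measurable U.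

Lemma measurable_dist_to c : measurable_fun setT (dist ^~ c).
Proof.
have [_ [_ [d_sym d_tri]]] := dist_metric.
apply: (measurability _ (RGenInftyO.measurableE RR)) => //.
move=> _ [_ [q ->] <-]; rewrite setTI; apply: open_measurable.
move=> y /=; rewrite in_itv /= => dy.
exists (q - dist y c)%R => [|z /= dyz]; first by rewrite subr_gt0.
rewrite in_itv /=; have := d_tri z y c; rewrite (d_sym z y); lra.
Qed.

Lemma measurable_dist_lex {d'} (T : measurableType d') (f g : T -> X) :
  measurable_fun setT f -> measurable_fun setT g ->
  measurable [set t | dist_lex (f t) (g t)].
Proof.
move=> mf mg.
have md m (h : T -> X) : measurable_fun setT h ->
    measurable_fun setT (fun t => dist (h t) (s m)).
  by move=> mh; exact: measurableT_comp (measurable_dist_to _) mh.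
have mset (b : T -> bool) : measurable_fun setT b -> measurable [set t | b t].
  by move=> mb; rewrite -[X in measurable X]setTI; exact: mb.
rewrite [X in measurable X](_ : _ = \bigcup_m
    ((\bigcap_(j in [set j | (j < m)%N])
        [set t | dist (f t) (s j) == dist (g t) (s j)]) `&`
     [set t | dist (f t) (s m) < dist (g t) (s m)]%R)).
  apply: bigcupT_measurable => m; apply: measurableI.
    apply: bigcap_measurableType => j _; apply: mset.
    exact: measurable_fun_eqr (md _ _ mf) (md _ _ mg).
  by apply: mset; exact: measurable_fun_ltr (md _ _ mf) (md _ _ mg).
apply/seteqP; split => t /=.
  by case=> m [eq_m lt_m]; exists m => //; split => // j /eq_m /= ->.
by case=> m _ [eq_m lt_m]; exists m; split => // j jm; apply/eqP/eq_m.
Qed.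
End DistanceLex.

Section ClassMinimum.
Context {d : measure_display} {X : measurableType d} (lt : X -> X -> Prop).
Hypotheses (lt_irrefl : forall x, ~ lt x x)
  (lt_trans : forall x y z, lt x y -> lt y z -> lt x z)
  (lt_total : forall x y, x <> y -> lt x y \/ lt y x).
Context (F : set (X * X)).
Hypotheses (F_equiv : equiv_rel_on F)
  (F_finite : forall x, finite_set [set y | F (x, y)]).

Definition is_class_min x y := F (x, y) /\ forall z, F (x, z) -> ~ lt z y.

Definition class_min x := xget x (is_class_min x).

Lemma is_class_min_uniq x y y' :
  is_class_min x y -> is_class_min x y' -> y = y'.
Proof.
move=> [Fy y_min] [Fy' y'_min]; apply: contrapT => /lt_total [].
- exact: y'_min.
- exact: y_min.
Qed.

Lemma class_minE x y : class_min x = y <-> is_class_min x y.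
Proof.
have [F_refl _ _] := F_equiv.
have min_x : is_class_min x (class_min x).
  have [z Fz z_min] := finite_set_has_minimal lt_irrefl lt_trans (F_finite x)
    (ex_intro _ x (F_refl x)).
  by apply: xgetPex; exists z.
by split=> [<- // | /(is_class_min_uniq min_x)].
Qed.

Lemma class_min_rel x : F (x, class_min x).
Proof. by have [] := (class_minE x _).1 erefl. Qed.

Lemma class_min_eq x y : F (x, y) -> class_min x = class_min y.
Proof.
have [_ F_sym F_trans] := F_equiv.
move=> Fxy; apply/class_minE; have [Fy y_min] := (class_minE y _).1 erefl.
split=> [|z Fxz]; first exact: F_trans Fxy Fy.
exact/y_min/(F_trans _ _ _ (F_sym _ _ Fxy) Fxz).
Qed.
End ClassMinimum.

Section FirstMover.
Context (H : groupType) (T : Type) (act : H -> T -> T) (code : H -> nat).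
Hypothesis code_inj : injective code.

Definition is_first_mover u v g :=
  act g u = v /\ forall k, act k u = v -> (code g <= code k)%N.

Definition first_mover u v := xget 1 (is_first_mover u v).

Lemma first_moverE u v g : (exists k, act k u = v) ->
  first_mover u v = g <-> is_first_mover u v g.
Proof.
move=> [k0 k0uv].
have [|m /asboolP [g0 [<- g0uv]] m_min] := ex_minnP (_ : exists m,
    `[< exists g, code g = m /\ act g u = v >]).
  by exists (code k0); apply/asboolP; exists k0.
have first_g0 : is_first_mover u v g0.
  by split=> // k kuv; apply: m_min; apply/asboolP; exists k.
have [fuv f_min] : is_first_mover u v (first_mover u v).
  by apply: xgetPex; exists g0.
split=> [<- | [guv g_min]]; first by split.
by apply: code_inj; apply/eqP; rewrite eqn_leq f_min // g_min.
Qed.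

Lemma first_mover_act u v : (exists k, act k u = v) ->
  act (first_mover u v) u = v.
Proof. by move=> ex; have [] := (first_moverE _ ex).1 erefl. Qed.

Lemma countableT_of_inj : countable [set: H].
Proof. by apply/countable_injP; exists code => x y _ _; exact: code_inj. Qed.

Lemma measurable_first_mover_eq {d'} (Y : measurableType d') (u v : Y -> T) g :
  (forall y, exists k, act k (u y) = v y) ->
  (forall k, measurable [set y | act k (u y) = v y]) ->
  measurable [set y | first_mover (u y) (v y) = g].
Proof.
move=> ex mact.
rewrite [X in measurable X](_ : _ = [set y | act g (u y) = v y] `\`
    \bigcup_k (if (code k < code g)%N then [set y | act k (u y) = v y]
               else set0)).
  apply: measurableD => //; apply: countable_bigcupT_measurable => [|k].
    exact: countableT_of_inj.
  by case: ifP.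
apply/seteqP; split=> y /=.
  move=> /(first_moverE _ (ex y)) [guv g_min]; split=> // -[k _] /=.
  by case: ltnP => // lt_kg /g_min; rewrite leqNgt lt_kg.
move=> [guv not_earlier]; apply/(first_moverE _ (ex y)); split=> // k kuv.
rewrite leqNgt; apply/negP => lt_kg; apply: not_earlier.
by exists k => //=; rewrite lt_kg.
Qed.
End FirstMover.

Section OrbitCocycle.
Context (H : groupType) {d : measure_display} (X : measurableType d)
  (act : H -> X -> X) (code : H -> nat) (lt : X -> X -> Prop)
  (F : nat -> set (X * X)).
Hypotheses (code_inj : injective code)
  (act1 : forall x, act 1 x = x)
  (actM : forall g h x, act (g * h) x = act g (act h x))
  (lt_irrefl : forall x, ~ lt x x)
  (lt_trans : forall x y z, lt x y -> lt y z -> lt x z)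
  (lt_total : forall x y, x <> y -> lt x y \/ lt y x)
  (F_equiv : forall n, equiv_rel_on (F n))
  (F_finite : forall n x, finite_set [set y | F n (x, y)])
  (F_mono : forall n, F n `<=` F n.+1)
  (F_cover : \bigcup_n F n = orbit_rel act).

Local Notation root n := (class_min lt (F n)).

Lemma F_le n m : (n <= m)%N -> F n `<=` F m.
Proof.
move=> /subnK <-; elim: (m - n) => // k IH p /IH.
by rewrite addSn; exact: F_mono.
Qed.

Lemma F_orbit_rel n p : F n p -> orbit_rel act p.
Proof. by move=> Fp; rewrite -F_cover; exists n. Qed.

Lemma orbit_rel_F p : orbit_rel act p -> exists n, F n p.
Proof. by rewrite -F_cover => -[n _ Fp]; exists n. Qed.

Lemma F_act n x y : F n (x, y) -> exists g, act g x = y.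
Proof. by move=> /F_orbit_rel [h /= ->]; exists h^-1. Qed.

Lemma rootE n x y : root n x = y <-> is_class_min lt (F n) x y.
Proof. exact: class_minE. Qed.

Lemma root_eq n x y : F n (x, y) -> root n x = root n y.
Proof. exact: class_min_eq. Qed.

Lemma F_root n x : F n (x, root n x).
Proof. exact: class_min_rel. Qed.

Lemma F_root_succ n x : F n.+1 (root n x, root n.+1 x).
Proof.
have [_ F_sym F_trans] := F_equiv n.+1.
exact: F_trans (F_sym _ _ (F_mono (F_root n x))) (F_root n.+1 x).
Qed.

Fixpoint root_mover n x : H :=
  if n is m.+1
  then first_mover act code (root m x) (root m.+1 x) * root_mover m x
  else first_mover act code x (root 0 x).

Lemma root_moverP n x : act (root_mover n x) x = root n x.
Proof.
elim: n => [|n IH] /=; first exact/first_mover_act/F_act/F_root.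
by rewrite actM IH; exact/first_mover_act/F_act/F_root_succ.
Qed.

Definition cocycle_at n x y := (root_mover n x)^-1 * root_mover n y.

Lemma cocycle_at_stable n m x y : F n (x, y) -> (n <= m)%N ->
  cocycle_at m x y = cocycle_at n x y.
Proof.
move=> Fxy /subnK <-; elim: (m - n) => // k IH.
have Fk j : (n <= j)%N -> root j x = root j y by move=> /F_le/(_ _ Fxy)/root_eq.
rewrite addSn /cocycle_at /= Fk ?leq_addl // Fk ?leqW ?leq_addl //.
by rewrite invgM -mulgA mulKg.
Qed.

Lemma act_cocycle_at n x y : F n (x, y) -> act (cocycle_at n x y)^-1 x = y.
Proof.
move=> Fxy; rewrite invgM invgK actM root_moverP (root_eq Fxy) -root_moverP.
by rewrite -actM mulVg act1.
Qed.

Definition orbit_cocycle (p : X * X) : H :=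
  xget 1 [set g | exists2 n, F n p & g = cocycle_at n p.1 p.2].

Lemma orbit_cocycleE n p : F n p -> orbit_cocycle p = cocycle_at n p.1 p.2.
Proof.
move=> Fnp; have [m Fmp ->] :
    [set g | exists2 n, F n p & g = cocycle_at n p.1 p.2] (orbit_cocycle p).
  by apply: xgetPex; exists (cocycle_at n p.1 p.2), n.
case: p Fnp Fmp => x y Fnp Fmp /=.
rewrite -(cocycle_at_stable Fnp (leq_maxl n m)).
by rewrite (cocycle_at_stable Fmp (leq_maxr n m)).
Qed.

Definition orbit_section (p : X * X) : X * H := (p.1, orbit_cocycle p).

Lemma orbit_sectionK p : orbit_rel act p -> xh_quot act (orbit_section p) = p.
Proof.
move=> /orbit_rel_F [n Fnp]; case: p Fnp => x y Fnp.
by rewrite /xh_quot /orbit_section /= (orbit_cocycleE Fnp) act_cocycle_at.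
Qed.

Lemma orbit_section_mul x y z : orbit_rel act (x, y) -> orbit_rel act (y, z) ->
  xh_source act (orbit_section (x, y)) = xh_range (orbit_section (y, z)) /\
  orbit_section (x, z) = xh_mul (orbit_section (x, y)) (orbit_section (y, z)).
Proof.
move=> /orbit_rel_F [n Fxy] /orbit_rel_F [m Fyz].
have {}Fxy := F_le (leq_maxl n m) Fxy; have {}Fyz := F_le (leq_maxr n m) Fyz.
have [_ _ F_trans] := F_equiv (maxn n m); have Fxz := F_trans _ _ _ Fxy Fyz.
rewrite /xh_source /xh_range /xh_mul /orbit_section /=.
rewrite !(orbit_cocycleE Fxy, orbit_cocycleE Fyz, orbit_cocycleE Fxz) /=.
by split; [exact: act_cocycle_at | rewrite /cocycle_at mulgA mulgK].
Qed.

Hypotheses (act_measurable : forall h, measurable_fun setT (act h))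
  (F_measurable : forall n, measurable (F n))
  (lt_measurable : forall k g, measurable [set x | lt (act k x) (act g x)]).

Let H_countable : countable [set: H] := countableT_of_inj code_inj.

Lemma measurable_F_act n g : measurable [set x | F n (x, act g x)].
Proof.
have := measurable_fun_pair (@measurable_id _ X setT) (act_measurable g).
by move=> /(_ measurableT _ (F_measurable n)); rewrite setTI.
Qed.

Lemma measurable_root_eq n g : measurable [set x | act g x = root n x].
Proof.
rewrite [X in measurable X](_ : _ = [set x | F n (x, act g x)] `\`
    \bigcup_k ([set x | F n (x, act k x)] `&`
               [set x | lt (act k x) (act g x)])).
  apply: measurableD; first exact: measurable_F_act.
  apply: countable_bigcupT_measurable H_countable _ => k.
  by apply: measurableI; [exact: measurable_F_act | exact: lt_measurable].
apply/seteqP; split=> x /=.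
  by move=> /esym /rootE [Fg g_min]; split=> // -[k _ [/g_min]].
move=> [Fg not_below]; apply/esym/rootE.
split=> // z Fz; have [k kxz] := F_act Fz; rewrite -kxz => lt_kg.
by apply: not_below; exists k => //; split=> //=; rewrite kxz.
Qed.

Lemma measurable_root_mover_eq n a : measurable [set x | root_mover n x = a].
Proof.
elim: n a => [|n IH] a /=.
  apply: (@measurable_first_mover_eq _ _ act code code_inj _ X id (root 0)).
    by move=> x; exact/F_act/F_root.
  exact: measurable_root_eq.
have step_measurable g :
    measurable [set x | act g (root n x) = root n.+1 x].
  rewrite [X in measurable X](_ : _ = \bigcup_b
      ([set x | root_mover n x = b] `&` [set x | act (g * b) x = root n.+1 x])).
    apply: countable_bigcupT_measurable H_countable _ => b.
    exact: measurableI (IH b) (measurable_root_eq _ _).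
  apply/seteqP; split=> x /=.
    by exists (root_mover n x) => //=; rewrite actM root_moverP.
  by case=> b _ [/= <-]; rewrite actM root_moverP.
rewrite [X in measurable X](_ : _ = \bigcup_b ([set x | root_mover n x = b] `&`
    [set x | first_mover act code (root n x) (root n.+1 x) = a * b^-1])).
  apply: countable_bigcupT_measurable H_countable _ => b.
  apply: measurableI (IH b) _.
  apply: (@measurable_first_mover_eq _ _ act code code_inj _ X (root n)
    (root n.+1) _ _ step_measurable).
  by move=> x; exact/F_act/F_root_succ.
apply/seteqP; split=> x /=.
  by move=> <-; exists (root_mover n x) => //=; rewrite mulgK.
by case=> b _ [/= <- ->]; rewrite mulgVK.
Qed.

Lemma measurable_orbit_section B h : measurable B ->
  measurable (orbit_rel act `&` orbit_section @^-1` (B `*` [set h])).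
Proof.
move=> mB.
rewrite [X in measurable X](_ : _ = \bigcup_n \bigcup_a (F n `&`
    (([set x | root_mover n x = a] `&` B) `*`
     [set y | root_mover n y = a * h]))).
  apply: bigcupT_measurable => n.
  apply: countable_bigcupT_measurable H_countable _ => a.
  apply: measurableI (F_measurable n) (measurableX _ _).
    exact: measurableI (measurable_root_mover_eq n a) mB.
  exact: measurable_root_mover_eq.
apply/seteqP; split=> -[x y] /=.
  move=> [/orbit_rel_F [n Fxy] [Bx]]; rewrite (orbit_cocycleE Fxy) /= => <-.
  by exists n => //; exists (root_mover n x) => //; rewrite /cocycle_at mulVKg.
case=> n _ [a _ [Fxy [[/= ax Bx] /= ay]]]; split; first exact: F_orbit_rel Fxy.
by split=> //=; rewrite (orbit_cocycleE Fxy) /cocycle_at /= ax ay mulKg.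
Qed.
End OrbitCocycle.

Theorem lemma5p1 (H : groupType) (E : set H)
    (d : measure_display) (X : measurableType d) (act : H -> X -> X) :
  countable_group H ->
  normal_subgroup E ->
  standard_borel X ->
  borel_action act ->
  (forall e x, E e -> act e x = x) ->
  hyperfinite (orbit_rel act) ->
  exists sigma : X * X -> X * H, borel_section act sigma.
Proof.
move=> [code code_inj] _ [dist [dist_metric _ [s s_dense] X_borel]]
  [act1 actM act_measurable] _
  [F [F_equiv F_measurable F_finite F_mono F_cover]].
have open_measurable U : metric_open dist U -> measurable U.
  by move=> U_open; rewrite X_borel; exact: sub_sigma_algebra.
have lt_irrefl := @dist_lex_irrefl _ X dist s.
have lt_trans := @dist_lex_trans _ X dist s.
have lt_total := dist_lex_total dist_metric s_dense.
have lt_measurable k g :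
    measurable [set x | dist_lex dist s (act k x) (act g x)].
  by apply: (measurable_dist_lex s dist_metric open_measurable).
exists (orbit_section act code (dist_lex dist s) F); split.
- by move=> B h mB; apply: measurable_orbit_section.
- by move=> p; apply: orbit_sectionK.
- by move=> x y z; apply: orbit_section_mul.
Qed.
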